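(* For all integers $n\ge0$: \begin{align*} pl_4(4n+1)&\equiv pl_4(4n+2)+pl_4(4n+3)\pmod 4,\\ pl_4(4n+3)&\equiv 0\pmod 2,\\ pl_8(8n+5)\equiv pl_8(8n+6)&\equiv pl_8(8n+7)\equiv 0\pmod 2. \end{align*}
   Context: For a positive integer $k$, $pl_k(n)$ denotes the number of $k$-component plane partitions of $n$ (plane partitions of $n$ all of whose entries are $\le k$), with $pl_k(0)=1$ and $pl_k(n)=0$ for $n<0$; equivalently $\sum_{n\ge0}pl_k(n)q^n=\prod_{n=1}^{\infty}(1-q^n)^{-\min(k,n)}$. *)

From mathcomp Require Import all_boot.
Set Implicit Arguments. Unset Strict Implicit. Unset Printing Implicit Defensive.

Definition multichoose (c j : nat) : nat := 'C((c + j).-1, j).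

(* plk_upto k m n = coefficient of q^n in prod_{i=1}^{m} (1-q^i)^{-min(k,i)} *)
Fixpoint plk_upto (k m n : nat) : nat :=
  match m with
  | 0 => (n == 0)
  | m'.+1 => sumn [seq multichoose (minn k m'.+1) j * plk_upto k m' (n - j * m'.+1)
                | j <- iota 0 (n %/ m'.+1).+1]
  end.

(* pl_k(n): coefficient of q^n in prod_{m>=1} (1-q^m)^{-min(k,m)};
   factors with m > n do not contribute to the coefficient of q^n. *)
Definition pl (k n : nat) : nat := plk_upto k n n.

(* Write phi(q) = prod_(i >= 1) (1 - q^i) and F_k = sum_n pl_k(n) q^n.  Then
   phi^k F_k = B_k := prod_(i < k) (1 - q^i)^(k - i), a polynomial.  For k = 2^a the
   Frobenius congruence gives phi(q)^k = phi(q^k) mod 2, and phi(q^k) is an invertible series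
   in q^k, so it commutes with taking the k-section of residue r; hence that section of F_k
   is even whenever the corresponding section of B_k is, a finite check on B_4 and B_8.
   Modulo 4, squaring the mod 2 congruences gives phi(q)^4 = phi(q^2)^2 and
   phi(q^2)^4 = phi(q^4)^2, whence phi(q^4)^2 F_4 = phi(q^2)^2 B_4 mod 4; multiplying by
   q^2 - q - 1 and taking the section of residue 3 mod 4 yields the first congruence, again
   after a finite check on B_4.  All series are truncated and compared up to a degree T. *)

From mathcomp Require Import all_boot all_algebra.
From mathcomp Require Import zify ring.
Set Implicit Arguments. Unset Strict Implicit. Unset Printing Implicit Defensive.
Import GRing.Theory.
Local Open Scope ring_scope.

Definition dvd_upto (d : int) (T : nat) (p : {poly int}) : bool :=
  all (fun i => d %| p`_i)%Z (iota 0 T.+1).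

Definition eqmod_upto (d : int) (T : nat) (p q : {poly int}) : bool :=
  dvd_upto d T (p - q).

Lemma dvd_uptoP d T (p : {poly int}) :
  reflect (forall i, (i <= T)%N -> (d %| p`_i)%Z) (dvd_upto d T p).
Proof.
apply: (iffP allP) => dp i; first by move=> le_iT; apply: dp; rewrite mem_iota.
by rewrite mem_iota ltnS; apply: dp.
Qed.

Section TruncatedCongruence.

Variables (d : int) (T : nat).
Implicit Types p q r : {poly int}.

Lemma dvd_uptoD p q : dvd_upto d T p -> dvd_upto d T q -> dvd_upto d T (p + q).
Proof.
move=> /dvd_uptoP dp /dvd_uptoP dq; apply/dvd_uptoP => i le_iT.
by rewrite coefD rpredD ?dp ?dq.
Qed.

Lemma dvd_uptoN p : dvd_upto d T p -> dvd_upto d T (- p).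
Proof. by move=> /dvd_uptoP dp; apply/dvd_uptoP => i le_iT; rewrite coefN rpredN dp. Qed.

Lemma dvd_uptoMl p q : dvd_upto d T p -> dvd_upto d T (q * p).
Proof.
move=> /dvd_uptoP dp; apply/dvd_uptoP => i le_iT; rewrite coefM rpred_sum // => j _.
by rewrite dvdz_mull // dp // (leq_trans (leq_subr _ _) le_iT).
Qed.

Lemma eqmod_upto_refl p : eqmod_upto d T p p.
Proof. by apply/dvd_uptoP => i _; rewrite subrr coef0. Qed.

Lemma eqmod_upto_sym p q : eqmod_upto d T p q -> eqmod_upto d T q p.
Proof. by move=> epq; rewrite /eqmod_upto -opprB; apply: dvd_uptoN. Qed.

Lemma eqmod_upto_trans p q r :
  eqmod_upto d T p q -> eqmod_upto d T q r -> eqmod_upto d T p r.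
Proof.
move=> epq eqr; rewrite /eqmod_upto (_ : p - r = p - q + (q - r)); last by ring.
exact: dvd_uptoD.
Qed.

Lemma eqmod_uptoMl p q r : eqmod_upto d T p q -> eqmod_upto d T (r * p) (r * q).
Proof. by rewrite /eqmod_upto -mulrBr; apply: dvd_uptoMl. Qed.

Lemma eqmod_uptoMr p q r : eqmod_upto d T p q -> eqmod_upto d T (p * r) (q * r).
Proof. by rewrite ![_ * r]mulrC; apply: eqmod_uptoMl. Qed.

Lemma eqmod_uptoM p1 p2 q1 q2 :
  eqmod_upto d T p1 q1 -> eqmod_upto d T p2 q2 -> eqmod_upto d T (p1 * p2) (q1 * q2).
Proof.
by move=> e1 e2; apply: eqmod_upto_trans (eqmod_uptoMr _ e1) (eqmod_uptoMl _ e2).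
Qed.

Lemma eqmod_upto_dvd p q : eqmod_upto d T p q -> dvd_upto d T q -> dvd_upto d T p.
Proof. by move=> epq dq; rewrite -(subrK q p); apply: dvd_uptoD. Qed.

Lemma dvd_upto_mulKl (V p : {poly int}) :
  V`_0 = 1 -> dvd_upto d T (V * p) -> dvd_upto d T p.
Proof.
move=> V0 /dvd_uptoP dVp; apply/dvd_uptoP; elim/ltn_ind=> i IH le_iT; have := dVp i le_iT.
rewrite coefM big_ord_recl V0 mul1r subn0 rpredDr // rpred_sum // => j _.
rewrite dvdz_mull // IH ?(leq_trans (leq_subr _ _) le_iT) //.
by rewrite /= /bump /= add1n; have := ltn_ord j; lia.
Qed.

End TruncatedCongruence.

Lemma dvd_uptoW d e T (p : {poly int}) : (e %| d)%Z -> dvd_upto d T p -> dvd_upto e T p.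
Proof.
move=> de /dvd_uptoP dp; apply/dvd_uptoP => i le_iT; exact: dvdz_trans de (dp i le_iT).
Qed.

Lemma dvd_uptoM d e T (p q : {poly int}) :
  dvd_upto d T p -> dvd_upto e T q -> dvd_upto (d * e) T (p * q).
Proof.
move=> /dvd_uptoP dp /dvd_uptoP dq; apply/dvd_uptoP => i le_iT.
rewrite coefM rpred_sum // => j _.
rewrite dvdz_mul ?dp ?dq ?(leq_trans (leq_subr _ _) le_iT) //.
by rewrite (leq_trans _ le_iT) // -ltnS.
Qed.

Lemma dvd_upto_natr (n T : nat) : dvd_upto n T n%:R.
Proof. by apply/dvd_uptoP => i _; rewrite -polyC_natr coefC natz; case: eqP. Qed.

Lemma eqmod_upto_coef d T (p q : {poly int}) :
  (forall i, (i <= T)%N -> p`_i = q`_i) -> eqmod_upto d T p q.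
Proof. by move=> epq; apply/dvd_uptoP => i le_iT; rewrite coefB epq // subrr dvdz0. Qed.

Lemma eqmod_upto0W d T (p q : {poly int}) : eqmod_upto 0 T p q -> eqmod_upto d T p q.
Proof. exact: dvd_uptoW (dvdz0 d). Qed.

Definition msect (m r : nat) (p : {poly int}) : {poly int} :=
  \poly_(i < size p) (if i == r %[mod m] then p`_i else 0).

Definition supp_mod (m e : nat) (p : {poly int}) : bool :=
  all (fun i => (i == e %[mod m]) || (p`_i == 0)) (iota 0 (size p)).

Lemma supp_modP m e (p : {poly int}) :
  reflect (forall i, i != e %[mod m] -> p`_i = 0) (supp_mod m e p).
Proof.
apply: (iffP allP) => sp i; last by rewrite mem_iota; case: eqP => //= /eqP/sp ->.
move=> ie; have [lt_ip | le_pi] := ltnP i (size p); last by rewrite nth_default.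
by apply/eqP; have := sp i; rewrite mem_iota lt_ip (negbTE ie); apply.
Qed.

Section Multisection.

Variable m : nat.
Implicit Types p q : {poly int}.

Lemma coef_msect r p i : (msect m r p)`_i = if i == r %[mod m] then p`_i else 0.
Proof.
rewrite coef_poly; case: ltnP => // le_p_i.
by rewrite nth_default // if_same.
Qed.

Lemma msectD r p q : msect m r (p + q) = msect m r p + msect m r q.
Proof. by apply/polyP=> i; rewrite coefD !coef_msect coefD; case: ifP; rewrite ?addr0. Qed.

Lemma msectB r p q : msect m r (p - q) = msect m r p - msect m r q.
Proof. by apply/polyP=> i; rewrite coefB !coef_msect coefB; case: ifP; rewrite ?subr0. Qed.

Lemma dvd_upto_msect d T r p : dvd_upto d T p -> dvd_upto d T (msect m r p).
Proof.
move=> /dvd_uptoP dp; apply/dvd_uptoP => i le_iT.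
by rewrite coef_msect; case: ifP => // _; apply: dp.
Qed.

Lemma eqmod_upto_msect d T r p q :
  eqmod_upto d T p q -> eqmod_upto d T (msect m r p) (msect m r q).
Proof. by rewrite /eqmod_upto -msectB; apply: dvd_upto_msect. Qed.

Lemma supp_mod1 : supp_mod m 0 1.
Proof. by apply/supp_modP => i; rewrite coef1; case: (i =P 0)%N => // ->; rewrite eqxx. Qed.

Lemma supp_modM e f p q :
  supp_mod m e p -> supp_mod m f q -> supp_mod m (e + f) (p * q).
Proof.
move=> /supp_modP sp /supp_modP sq; apply/supp_modP => i ie; rewrite coefM big1 // => j _.
have le_ji : (j <= i)%N by rewrite -ltnS.
have [je|] := eqVneq (j %% m)%N (e %% m)%N; last by move/sp ->; rewrite mul0r.
rewrite sq ?mulr0 //; apply: contra ie => /eqP ijf.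
by rewrite -(subnK le_ji) -modnDm ijf je modnDm addnC.
Qed.

Lemma supp_modX p n : supp_mod m 0 p -> supp_mod m 0 (p ^+ n).
Proof.
move=> sp; elim: n => [|n IH]; first by rewrite expr0; apply: supp_mod1.
by rewrite exprS -[0%N]/(0 + 0)%N; apply: supp_modM.
Qed.

Lemma supp_mod_prod (I : Type) (s : seq I) (F : I -> {poly int}) :
  (forall i, supp_mod m 0 (F i)) -> supp_mod m 0 (\prod_(i <- s) F i).
Proof.
move=> sF; apply: (big_ind (supp_mod m 0)) => //; first exact: supp_mod1.
by move=> p q; rewrite -[0%N]/(0 + 0)%N; apply: supp_modM.
Qed.

Lemma msect_mul e r s p q :
  supp_mod m e p -> s = r + e %[mod m] -> msect m s (p * q) = p * msect m r q.
Proof.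
move=> /supp_modP sp sre; apply/polyP=> i; rewrite coef_msect !coefM.
have shift j : (j <= i)%N -> p`_j != 0 -> (i - j == r %[mod m]) = (i == s %[mod m]).
  move=> le_ji pj; have /eqP je : j == e %[mod m] by apply: contraTT pj => /sp ->.
  by rewrite sre -{2}(subnK le_ji) -modnDm je modnDm eqn_modDr.
case: ifP => ise; [apply: eq_bigr | rewrite big1 //] => j _; rewrite coef_msect;
  have [->|pj] := eqVneq p`_j 0; rewrite ?mul0r // (shift j (ltn_ord j)) ?ise ?mulr0 //.
Qed.

Lemma msect_mul0 r p q : supp_mod m 0 p -> msect m r (p * q) = p * msect m r q.
Proof. by move=> sp; apply: msect_mul sp _; rewrite addn0. Qed.

Lemma supp_mod_msect r p : supp_mod m r (msect m r p).
Proof. by apply/supp_modP => i ir; rewrite coef_msect (negbTE ir). Qed.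

Lemma msect_supp_mod e r p : supp_mod m e p -> r != e %[mod m] -> msect m r p = 0.
Proof.
move=> /supp_modP sp re; apply/polyP=> i; rewrite coef_msect coef0.
by case: eqP => // ir; rewrite sp // ir.
Qed.

End Multisection.

Lemma msect_split_even p : supp_mod 2 0 p -> p = msect 4 0 p + msect 4 2 p.
Proof.
move=> /supp_modP sp; apply/polyP=> i; rewrite coefD !coef_msect.
case: ifP => [/eqP i0 | n0]; first by rewrite ifN ?addr0 //; lia.
case: ifP => [_ | n2]; first by rewrite add0r.
by rewrite add0r sp //; move: n0 n2; lia.
Qed.

Definition euler (s M : nat) : {poly int} := \prod_(1 <= i < M.+1) (1 - 'X^(s * i)).

Lemma euler_coef0 s M : (0 < s)%N -> (euler s M)`_0 = 1.
Proof.
move=> s_gt0; rewrite /euler big_nat.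
elim: (index_iota 1 M.+1) => [|i r IH]; first by rewrite big_nil coef1.
rewrite big_cons; case: ifP => // /andP[i_gt0 _].
by rewrite coef0M IH mulr1 coefB coef1 coefXn eqxx eq_sym muln_eq0 !gtn_eqF ?subr0.
Qed.

Lemma supp_mod_euler s M : supp_mod s 0 (euler s M).
Proof.
apply: supp_mod_prod => i; apply/supp_modP => j js; rewrite coefB coef1 coefXn.
have [j_neq0 j_neq_si] : (j != 0)%N /\ (j != s * i)%N.
  by split; apply: contraNneq js => ->; rewrite ?modnMr mod0n.
by rewrite (negbTE j_neq0) (negbTE j_neq_si) subr0.
Qed.

Lemma sqr_subXn_mod2 a T : eqmod_upto 2 T ((1 - 'X^a) ^+ 2) (1 - 'X^(a * 2)).
Proof.
rewrite /eqmod_upto exprM (_ : _ - _ = 2 * ('X^a ^+ 2 - 'X^a)); last by ring.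
by rewrite mulrC; apply: dvd_uptoMl; apply: dvd_upto_natr.
Qed.

Lemma euler_sqr_mod2 s M T : eqmod_upto 2 T (euler s M ^+ 2) (euler (s * 2) M).
Proof.
rewrite /euler -prodrXl; elim: (index_iota 1 M.+1) => [|i r IH].
  by rewrite !big_nil; apply: eqmod_upto_refl.
by rewrite !big_cons mulnAC; apply: eqmod_uptoM => //; apply: sqr_subXn_mod2.
Qed.

Lemma euler_pow2_mod2 a M T :
  eqmod_upto 2 T (euler 1 M ^+ (2 ^ a)) (euler (2 ^ a) M).
Proof.
elim: a => [|a IH]; first exact: eqmod_upto_refl.
rewrite expnSr exprM.
apply: eqmod_upto_trans (euler_sqr_mod2 _ _ _).
by rewrite !expr2; apply: eqmod_uptoM.
Qed.

Lemma eqmod_upto_sqr_mod4 T A B :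
  eqmod_upto 2 T A B -> eqmod_upto 4 T (A ^+ 2) (B ^+ 2).
Proof.
move=> eAB; rewrite /eqmod_upto (_ : 4 = 2 * 2) //.
rewrite (_ : _ - _ = (A - B) * (A - B) + 2 * (B * (A - B))).
  exact: dvd_uptoD (dvd_uptoM eAB eAB) (dvd_uptoM (dvd_upto_natr 2 T) (dvd_uptoMl B eAB)).
by ring.
Qed.

Lemma euler_pow4_mod4 s M T :
  eqmod_upto 4 T (euler s M ^+ 4) (euler (s * 2) M ^+ 2).
Proof. by rewrite (exprM _ 2 2); apply: eqmod_upto_sqr_mod4; apply: euler_sqr_mod2. Qed.

Lemma multichoose0 c : multichoose c 0 = 1%N.
Proof. by rewrite /multichoose bin0. Qed.

Lemma multichooseS c t :
  multichoose c.+1 t.+1 = (multichoose c t.+1 + multichoose c.+1 t)%N.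
Proof. by rewrite /multichoose addSn !addnS /= binS. Qed.

Definition negbin (c d T : nat) : {poly int} :=
  \poly_(i < T.+1) (if (d %| i)%N then (multichoose c (i %/ d))%:Z else 0).

Section NegativeBinomial.

Variables (d T : nat).
Hypothesis d_gt0 : (0 < d)%N.

Lemma negbin0 : eqmod_upto 0 T (negbin 0 d T) 1.
Proof.
apply: eqmod_upto_coef => i le_iT; rewrite coef_poly ltnS le_iT coef1.
case: (posnP i) => [->|i_gt0]; first by rewrite dvdn0 div0n multichoose0.
case: ifP => // d_i; rewrite /multichoose add0n bin_small //.
by rewrite prednK // divn_gt0 // dvdn_leq.
Qed.

Lemma negbin_step c : eqmod_upto 0 T ((1 - 'X^d) * negbin c.+1 d T) (negbin c d T).
Proof.
apply: eqmod_upto_coef => i le_iT.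
rewrite mulrBl mul1r coefB coefXnM !coef_poly ltnS le_iT.
case: ltnP => [lt_id | le_di].
  by rewrite subr0; case: ifP => // _; rewrite divn_small // !multichoose0.
rewrite (leq_ltn_trans (leq_subr d i)) ?ltnS //.
have [/dvdnP[[|t] def_i] | nd_i] := boolP (d %| i)%N; rewrite ?def_i in le_di *.
- by move: le_di; rewrite mul0n leqNgt d_gt0.
- rewrite mulnK // mulSn addKn dvdn_mull // mulnK //.
  by rewrite multichooseS PoszD addrK.
- by rewrite (dvdn_subl le_di (dvdnn d)) (negbTE nd_i) subr0.
Qed.

Lemma negbin_inv c : eqmod_upto 0 T ((1 - 'X^d) ^+ c * negbin c d T) 1.
Proof.
elim: c => [|c IH]; first by rewrite expr0 mul1r; apply: negbin0.
rewrite exprSr -mulrA.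
exact: eqmod_upto_trans (eqmod_uptoMl _ (negbin_step c)) IH.
Qed.

End NegativeBinomial.

Lemma sum_dvdn_div (d n : nat) (h : nat -> nat) : (0 < d)%N ->
  (\sum_(j < n.+1) (if d %| j then h (j %/ d) else 0) = \sum_(t < (n %/ d).+1) h t)%N.
Proof.
move=> d_gt0; elim: n => [|n IH]; first by rewrite div0n !big_ord1 dvdn0 div0n.
rewrite big_ord_recr /= IH divnS //.
by case: (d %| n.+1)%N; rewrite ?addn0 // add1n [in RHS]big_ord_recr.
Qed.

Definition pl_series (k m T : nat) : {poly int} := \poly_(i < T.+1) (plk_upto k m i)%:Z.

Lemma pl_series_step k m T :
  eqmod_upto 0 T (pl_series k m.+1 T) (negbin (minn k m.+1) m.+1 T * pl_series k m T).
Proof.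
apply: eqmod_upto_coef => i le_iT; rewrite coefM coef_poly ltnS le_iT /=.
set d := m.+1; set c := minn k d.
pose h t := (multichoose c t * plk_upto k m (i - t * d))%N.
transitivity (\sum_(j < i.+1) Posz (if (d %| j)%N then h (j %/ d)%N else 0%N)).
  rewrite -(big_morph Posz PoszD (erefl (Posz 0))) sum_dvdn_div //.
  by rewrite sumnE big_map -(big_mkord xpredT) /index_iota subn0 /= big_cons.
apply: eq_bigr => j _; have le_ji : (j <= i)%N by rewrite -ltnS.
rewrite !coef_poly ltnS (leq_trans le_ji le_iT) ltnS (leq_trans (leq_subr _ _) le_iT).
by case: ifP => d_j; rewrite ?mul0r // /h divnK // PoszM.
Qed.

Definition pl_denom (k m : nat) : {poly int} :=
  \prod_(1 <= i < m.+1) (1 - 'X^i) ^+ minn k i.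

Definition pl_numer (k m : nat) : {poly int} :=
  \prod_(1 <= i < m.+1) (1 - 'X^i) ^+ (k - minn k i).

Lemma pl_denom_series k m T : eqmod_upto 0 T (pl_denom k m * pl_series k m T) 1.
Proof.
elim: m => [|m IH].
  rewrite /pl_denom big_geq // mul1r; apply: eqmod_upto_coef => i le_iT.
  by rewrite coef_poly ltnS le_iT coef1 /=; case: (i == 0)%N.
rewrite /pl_denom big_nat_recr //= -/(pl_denom k m).
apply: eqmod_upto_trans (eqmod_uptoMl _ (pl_series_step k m T)) _.
set f := (1 - 'X^(m.+1)) ^+ _; set g := negbin _ _ _.
rewrite (_ : _ * _ = pl_denom k m * pl_series k m T * (f * g)); last by ring.
by rewrite -[1]mul1r; apply: eqmod_uptoM IH (negbin_inv _ _ _).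
Qed.

Lemma euler_pow_pl_series k M T :
  eqmod_upto 0 T (euler 1 M ^+ k * pl_series k M T) (pl_numer k M).
Proof.
have -> : euler 1 M ^+ k = pl_numer k M * pl_denom k M.
  rewrite /euler -prodrXl -big_split /=; apply: eq_bigr => i _.
  by rewrite mul1n -exprD subnK // geq_minl.
by rewrite -mulrA -[X in eqmod_upto _ _ _ X]mulr1; apply: eqmod_uptoMl; apply: pl_denom_series.
Qed.

Lemma plk_upto_stable k m n : (n <= m)%N -> plk_upto k m n = pl k n.
Proof.
elim: m => [|m IH] le_nm; first by move: le_nm; rewrite leqn0 => /eqP ->.
have [lt_nm|le_Sm_n] := ltnP n m.+1; last by rewrite [n](@anti_leq _ m.+1) ?le_nm.
by rewrite -IH // /= divn_small //= multichoose0 mul1n subn0 addn0.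
Qed.

Lemma coef_pl_series k M T j :
  (j <= T)%N -> (T <= M)%N -> (pl_series k M T)`_j = (pl k j)%:Z.
Proof.
by move=> le_jT le_TM; rewrite coef_poly ltnS le_jT plk_upto_stable // (leq_trans le_jT).
Qed.

Definition mul_seq (s t : seq int) : seq int :=
  mkseq (fun i => foldr +%R 0 [seq s`_j * t`_(i - j) | j <- iota 0 i.+1])
        (size s + size t).-1.

Lemma Poly_mul_seq s t : Poly (mul_seq s t) = Poly s * Poly t.
Proof.
apply/polyP => i; rewrite coef_Poly.
have [lt_i | le_i] := ltnP i (size s + size t).-1.
  rewrite nth_mkseq // foldrE big_map coefM.
  have -> : iota 0 i.+1 = index_iota 0 i.+1 by rewrite /index_iota subn0.
  by rewrite big_mkord; apply: eq_bigr => j _; rewrite !coef_Poly.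
rewrite nth_default ?size_mkseq // nth_default // (leq_trans (size_polyMleq _ _)) //.
by apply: leq_trans le_i; rewrite -!subn1 leq_sub2r // leq_add ?size_Poly.
Qed.

Definition factor_seq (i : nat) : seq int := 1 :: rcons (nseq i.-1 0) (-1).

Lemma Poly_factor_seq i : (0 < i)%N -> Poly (factor_seq i) = 1 - 'X^i.
Proof.
move=> i_gt0; apply/polyP => -[|j]; rewrite coef_Poly coefB coef1 coefXn /=.
  by rewrite eq_sym gtn_eqF ?subr0.
rewrite nth_rcons size_nseq nth_nseq -(prednK i_gt0) eqSS.
by case: ltngtP => //; rewrite subrr sub0r.
Qed.

Lemma Poly_foldr_factor (e : nat -> nat) (r : seq nat) : all (leq 1) r ->
  Poly (foldr (fun i s => iter (e i) (mul_seq (factor_seq i)) s) [:: 1] r) =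
  \prod_(i <- r) (1 - 'X^i) ^+ e i.
Proof.
elim: r => [|i r IH] /=; first by rewrite big_nil cons_poly_def mul0r add0r.
case/andP=> i_gt0 /IH {}IH; rewrite big_cons -IH.
elim: (e i) => [|n IHn] /=; first by rewrite mul1r.
by rewrite Poly_mul_seq IHn Poly_factor_seq // exprS mulrA.
Qed.

(* A coefficient list of [pl_numer k k] that [vm_compute] can evaluate. *)
Definition pl_numer_seq (k : nat) : seq int :=
  foldr (fun i s => iter (k - minn k i) (mul_seq (factor_seq i)) s) [:: 1]
        (index_iota 1 k.+1).

Lemma pl_numerE k M : (k <= M)%N -> pl_numer k M = Poly (pl_numer_seq k).
Proof.
move=> le_kM; rewrite /pl_numer (big_cat_nat _ (n := k.+1)) //=.
rewrite [X in _ * X]big_nat_cond [X in _ * X]big1 ?mulr1; last first.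
  by move=> i /andP[/andP[lt_ki _] _]; rewrite (minn_idPl (ltnW lt_ki)) subnn expr0.
rewrite Poly_foldr_factor //; apply/allP => i.
by rewrite mem_index_iota => /andP[].
Qed.

Lemma polyOver_dvd_upto d T (p : {poly int}) :
  p \is a polyOver (dvdz d) -> dvd_upto d T p.
Proof. by move=> /polyOverP dp; apply/dvd_uptoP => i _; apply: dp. Qed.

Lemma polyOver_msect_Poly d m r s :
  all (fun ic => (ic.1 != r %[mod m]) || (d %| ic.2)%Z) (zip (iota 0 (size s)) s) ->
  msect m r (Poly s) \is a polyOver (dvdz d).
Proof.
move=> /(all_nthP (0%N, 0)) ds; apply/polyOverP => i; rewrite coef_msect coef_Poly.
case: ifP => [ir|_]; last exact: rpred0.
have [lt_is | le_si] := ltnP i (size s); last by rewrite nth_default ?rpred0.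
have := ds i; rewrite size_zip size_iota minnn nth_zip ?size_iota // nth_iota //= ir.
exact.
Qed.

Lemma pl_pow2_mod2 a r N :
  msect (2 ^ a) r (pl_numer (2 ^ a) (2 ^ a)) \is a polyOver (dvdz 2) ->
  N = r %[mod 2 ^ a] -> pl (2 ^ a) N = 0 %[mod 2].
Proof.
set k := (2 ^ a)%N => numer_even eq_Nr; set M := maxn k N; set F := pl_series k M N.
have le_kM : (k <= M)%N := leq_maxl k N.
have eEF : eqmod_upto 2 N (euler k M * F) (pl_numer k M).
  apply: eqmod_upto_trans (eqmod_upto0W 2 (euler_pow_pl_series k M N)).
  exact/eqmod_uptoMr/eqmod_upto_sym/euler_pow2_mod2.
have dF : dvd_upto 2 N (msect k r F).
  apply: (@dvd_upto_mulKl _ _ (euler k M)); first exact: euler_coef0 (expn_gt0 2 a).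
  rewrite -msect_mul0 ?supp_mod_euler //.
  apply: eqmod_upto_dvd (eqmod_upto_msect k r eEF) _.
  by rewrite (pl_numerE le_kM) -(pl_numerE (leqnn k)); apply: polyOver_dvd_upto.
move/dvd_uptoP/(_ N (leqnn N)): dF.
by rewrite coef_msect eq_Nr eqxx coef_pl_series ?leq_maxr // dvdzE /= mod0n => /eqP.
Qed.

Lemma pl_numer4_msect3 : msect 4 3 (pl_numer 4 4) \is a polyOver (dvdz 2).
Proof. by rewrite pl_numerE //; apply: polyOver_msect_Poly; vm_compute. Qed.

Lemma pl_numer8_msect r :
  r \in [:: 5; 6; 7]%N -> msect 8 r (pl_numer 8 8) \is a polyOver (dvdz 2).
Proof.
rewrite pl_numerE // !inE => /or3P[] /eqP ->.
all: by apply: polyOver_msect_Poly; vm_compute.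
Qed.

Definition w4 : {poly int} := 'X^2 - 'X - 1.

Lemma w4E : w4 = Poly [:: -1; -1; 1].
Proof.
apply/polyP => -[|[|[|i]]]; rewrite coef_Poly !coefB coefXn coefX coef1 //=.
by rewrite nth_nil !subr0.
Qed.

Lemma coef_w4M p i : (2 <= i)%N -> (w4 * p)`_i = p`_(i - 2) - p`_i.-1 - p`_i.
Proof.
move=> le_2i; rewrite !mulrBl mul1r !coefB coefXnM coefXM ltnNge le_2i.
by case: i le_2i.
Qed.

Lemma pl_numer4_w4_msect3 : msect 4 3 (w4 * pl_numer 4 4) \is a polyOver (dvdz 4).
Proof. by rewrite pl_numerE // w4E -Poly_mul_seq; apply: polyOver_msect_Poly; vm_compute. Qed.

Lemma pl_numer4_w4_msect1 : msect 4 1 (w4 * pl_numer 4 4) \is a polyOver (dvdz 2).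
Proof. by rewrite pl_numerE // w4E -Poly_mul_seq; apply: polyOver_msect_Poly; vm_compute. Qed.

Lemma euler4_sqr_pl_series M T :
  eqmod_upto 4 T (euler 4 M ^+ 2 * pl_series 4 M T) (euler 2 M ^+ 2 * pl_numer 4 M).
Proof.
have eJF : eqmod_upto 4 T (euler 2 M ^+ 2 * pl_series 4 M T) (pl_numer 4 M).
  apply: eqmod_upto_trans (eqmod_upto0W 4 (euler_pow_pl_series 4 M T)).
  exact/eqmod_uptoMr/eqmod_upto_sym/euler_pow4_mod4.
apply: eqmod_upto_trans (eqmod_uptoMl _ eJF); rewrite mulrA -exprD.
exact/eqmod_uptoMr/eqmod_upto_sym/euler_pow4_mod4.
Qed.

(* [J = euler 2 M ^+ 2] is a series in [q^2]; its part in degrees [0 mod 4] commutes with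
   the 4-section, while its part in degrees [2 mod 4] is even since [J = euler 4 M] mod 2. *)
Lemma msect3_euler2_sqr_pl_numer4 M T : (4 <= M)%N ->
  dvd_upto 4 T (msect 4 3 (euler 2 M ^+ 2 * (w4 * pl_numer 4 M))).
Proof.
move=> le_4M; have J2_even : dvd_upto 2 T (msect 4 2 (euler 2 M ^+ 2)).
  apply: eqmod_upto_dvd (eqmod_upto_msect 4 2 (euler_sqr_mod2 2 M T)) _.
  by rewrite (msect_supp_mod (supp_mod_euler 4 M)) //; apply/dvd_uptoP => i _; rewrite coef0.
rewrite (msect_split_even (supp_modX 2 (supp_mod_euler 2 M))) mulrDl msectD.
rewrite [msect 4 3 (msect 4 0 _ * _)]msect_mul0 ?supp_mod_msect //.
rewrite [msect 4 3 (msect 4 2 _ * _)](@msect_mul 4 2 1) ?supp_mod_msect //.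
rewrite (pl_numerE le_4M) -(pl_numerE (leqnn 4)).
apply: dvd_uptoD; first exact/dvd_uptoMl/polyOver_dvd_upto/pl_numer4_w4_msect3.
rewrite (_ : 4 = 2 * 2) //.
exact/(dvd_uptoM J2_even)/polyOver_dvd_upto/pl_numer4_w4_msect1.
Qed.

Lemma pl4_mod4 n : pl 4 (4 * n + 1) = pl 4 (4 * n + 2) + pl 4 (4 * n + 3) %[mod 4].
Proof.
set N := (4 * n + 3)%N; set M := maxn 4 N; set F := pl_series 4 M N.
have dF : dvd_upto 4 N (msect 4 3 (w4 * F)).
  apply: (@dvd_upto_mulKl _ _ (euler 4 M ^+ 2)); first by rewrite coef0M euler_coef0.
  rewrite -msect_mul0 ?supp_modX ?supp_mod_euler // mulrCA.
  apply: eqmod_upto_dvd (eqmod_upto_msect 4 3 (eqmod_uptoMl w4 (euler4_sqr_pl_series M N))) _.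
  by rewrite mulrCA; apply: msect3_euler2_sqr_pl_numer4; apply: leq_maxl.
have [N3 N2 N1] : [/\ N == 3 %[mod 4], N - 2 = 4 * n + 1 & N.-1 = 4 * n + 2]%N.
  by rewrite /N; split; lia.
move/dvd_uptoP/(_ N (leqnn N)): dF; rewrite coef_msect N3 coef_w4M; last by rewrite /N addn3.
rewrite N2 N1 !coef_pl_series ?leq_maxr // /N; lia.
Qed.

Local Close Scope ring_scope.

Theorem theorem3 (n : nat) :
  [/\ pl 4 (4 * n + 1) = pl 4 (4 * n + 2) + pl 4 (4 * n + 3) %[mod 4],
      pl 4 (4 * n + 3) = 0 %[mod 2],
      pl 8 (8 * n + 5) = 0 %[mod 2],
      pl 8 (8 * n + 6) = 0 %[mod 2]
    & pl 8 (8 * n + 7) = 0 %[mod 2]].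
Proof.
have pl8_even r : r \in [:: 5; 6; 7] -> pl 8 (8 * n + r) = 0 %[mod 2].
  move=> r_in; apply: (@pl_pow2_mod2 3 r); first exact: pl_numer8_msect.
  by rewrite -modnDml modnMr.
split; rewrite ?pl8_even //; first exact: pl4_mod4.
apply: (@pl_pow2_mod2 2 3); first exact: pl_numer4_msect3.
by rewrite -modnDml modnMr.
Qed.
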